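(* Let $(G,c)$ and $(H,c')$ be BPEC-DAGs on the same vertex set $V$. If $\mathcal M(G,c)=\mathcal M(H,c')$, then $G=H$ and $c$ and $c'$ induce the same partition of the edge set into color classes; i.e., each BPEC-DAG is the unique BPEC-DAG in its model equivalence class.
   Context: An edge-colored DAG $(G,c)$, $G=(V,E)$, has a coloring of $V\sqcup E$ (vertex and edge colors disjoint) in which every vertex forms its own color class. It is properly edge-colored if every edge color class contains at least two edges, and blocked if any two edges $ij,kl$ of the same color satisfy $j=l$. A BPEC-DAG is a blocked, properly edge-colored DAG. $\mathcal M(G,c)$ is the set of $(I-\Lambda)^{-T}\Omega(I-\Lambda)^{-1}$ with $\Omega=\mathrm{diag}(\omega_i)$, $\omega_i>0$, $\lambda_{ij}=0$ for $ij\notin E$, and $\lambda_{ij}=\lambda_{kl}$ whenever $c(ij)=c(kl)$. *)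

From mathcomp Require Import all_boot all_order all_algebra.
From mathcomp Require Import reals.
Set Implicit Arguments. Unset Strict Implicit. Unset Printing Implicit Defensive.
Import Order.TTheory GRing.Theory Num.Theory.
Local Open Scope ring_scope.

(* A directed graph on vertex set 'I_n is given by its edge relation E:
   E i j means the edge i -> j is present. *)

(* No directed cycle: no nonempty E-path from a vertex back to itself
   (this also excludes self-loops). *)
Definition is_dag (n : nat) (E : rel 'I_n) : Prop :=
  forall (i : 'I_n) (p : seq 'I_n),
    p != [::] -> path E i p -> last i p != i.

(* Edge colouring: c i j is the colour of the edge i -> j (only meaningful
   when E i j).  Vertex colours are all singleton classes, so they impose
   no constraint and are not represented. *)

Definition properly_edge_colored (n : nat) (E : rel 'I_n)
  (c : 'I_n -> 'I_n -> nat) : Prop :=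
  forall i j : 'I_n, E i j ->
    exists k l : 'I_n, [/\ E k l, (k, l) != (i, j) & c k l = c i j].

Definition blocked (n : nat) (E : rel 'I_n) (c : 'I_n -> 'I_n -> nat) : Prop :=
  forall i j k l : 'I_n, E i j -> E k l -> c i j = c k l -> j = l.

Definition BPEC_DAG (n : nat) (E : rel 'I_n) (c : 'I_n -> 'I_n -> nat) : Prop :=
  [/\ is_dag E, properly_edge_colored E c & blocked E c].

Definition in_model (R : realType) (n : nat) (E : rel 'I_n)
  (c : 'I_n -> 'I_n -> nat) (S : 'M[R]_n) : Prop :=
  exists (L : 'M[R]_n) (w : 'rV[R]_n),
    [/\ (forall i, 0 < w 0 i),
        (forall i j, ~~ E i j -> L i j = 0),
        (forall i j k l, E i j -> E k l -> c i j = c k l -> L i j = L k l) &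
        S = (invmx (1%:M - L))^T *m diag_mx w *m invmx (1%:M - L)].

From mathcomp Require Import all_boot all_order all_algebra.
From mathcomp Require Import reals.
From Stdlib Require Import Classical.

(* Settle the vertices of G from the sinks upwards.  If r is a sink of a
   parametrization (L, w) of S, then e_r (1 - L)^T is the unique vector with r-th
   entry 1 that S maps onto a multiple of e_r, so column r of L is determined by S.
   Suppose every child of r is settled: it has the same parents, children and
   colour classes of incoming edges in G and H.  If S has an H-parametrization
   vanishing on settled columns, then so does every G-parametrization (induction
   from the sinks), and r is a sink of it.  Choosing for S the covariance of the
   H-matrix whose column r carries distinct positive values on distinct colours
   recovers the parents of r and their colour classes.  Choosing the colour class
   of an edge r -> j of H shows that j is settled: otherwise the precision matrix
   of S forces L j r = w_r > 0, and the second edge k -> r of that colour in G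
   gets -w_r = w_r L' k j >= 0, where L' is the indicator of the colour class. *)

Set Implicit Arguments. Unset Strict Implicit. Unset Printing Implicit Defensive.
Import Order.TTheory GRing.Theory Num.Theory.
Local Open Scope ring_scope.

Section DagInduction.
Variables (n : nat) (E : rel 'I_n).
Hypothesis dagE : is_dag E.

Lemma dag_irrefl r : ~~ E r r.
Proof.
by apply/negP => Err; have := @dagE r [:: r] isT; rewrite /= Err eqxx => /(_ isT).
Qed.

Lemma dag_path_uniq p r : path E r p -> uniq (r :: p).
Proof.
elim: p r => [|x p IH] r //= /andP[Erx px].
apply/andP; split; last exact: IH x px.
apply/negP => r_in.
have : path E r (x :: p) by rewrite /= Erx.
case/splitPr: r_in => p1 p2; rewrite cat_path => /andP[p1_path /= /andP[back _]].
have := @dagE r (rcons p1 r); rewrite rcons_path p1_path back last_rcons eqxx.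
by case: p1 {p1_path back} => [|? ?] /(_ isT isT).
Qed.

Lemma dag_ind (Q : 'I_n -> Prop) :
  (forall r, (forall d, E r d -> Q d) -> Q r) -> forall r, Q r.
Proof.
move=> IH; suff Qm m r : (forall p, path E r p -> size p < m)%N -> Q r.
  move=> r; apply: (Qm n) => p /dag_path_uniq/card_uniqP card_p.
  by have := max_card (mem (r :: p)); rewrite card_ord card_p.
elim: m r => [|m IHm] r short_paths; first by have := short_paths [::] isT.
apply: IH => d Erd; apply: IHm => p dp.
by have := short_paths (d :: p); rewrite /= Erd dp; apply.
Qed.

End DagInduction.

Lemma unitmx_scale_preimage_eq (K : fieldType) (n : nat) (S : 'M[K]_n)
    (x y v : 'rV[K]_n) (a b : K) (r : 'I_n) :
  S \in unitmx -> x *m S = a *: v -> y *m S = b *: v ->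
  x 0 r = 1 -> y 0 r = 1 -> x = y.
Proof.
move=> S_unit xS yS x1 y1; set u := v *m invmx S.
have xE : x = a *: u by rewrite scalemxAl -xS mulmxK.
have yE : y = b *: u by rewrite scalemxAl -yS mulmxK.
clearbody u; move: x1 y1; rewrite xE yE !mxE => aur bur.
have ur_neq0 : u 0 r != 0.
  by apply: contra_eq_neq aur => ->; rewrite mulr0 eq_sym oner_neq0.
by rewrite (mulIf ur_neq0 (etrans aur (esym bur))).
Qed.

Section Parametrization.
Variables (R : realType) (n : nat).
Implicit Types (E F : rel 'I_n) (S L M : 'M[R]_n) (w d : 'rV[R]_n).
Local Notation e_ r := (delta_mx 0 r : 'rV[R]_n).

Definition cov L (w : 'rV[R]_n) : 'M[R]_n :=
  (invmx (1%:M - L))^T *m diag_mx w *m invmx (1%:M - L).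

Definition param E (c : 'I_n -> 'I_n -> nat) S L (w : 'rV[R]_n) :=
  [/\ forall i, 0 < w 0 i,
      forall i j, ~~ E i j -> L i j = 0,
      forall i j k l, E i j -> E k l -> c i j = c k l -> L i j = L k l &
      S = cov L w].

Lemma unitmx_1_sub E L : is_dag E -> (forall i j, ~~ E i j -> L i j = 0) ->
  1%:M - L \in unitmx.
Proof.
move=> dagE suppL; rewrite -unitmx_tr -row_free_unit; apply/inj_row_free => v.
rewrite linearB /= trmx1 mulmxBr mulmx1 => /subr0_eq v_fix.
suff v0 r : v 0 r = 0 by apply/rowP => r; rewrite v0 mxE.
elim/(dag_ind dagE): r => r IH.
rewrite v_fix mxE big1 // => i _; rewrite mxE.
by case: (boolP (E r i)) => [/IH ->|/suppL ->]; rewrite ?mul0r ?mulr0.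
Qed.

Lemma cov_unit L w : 1%:M - L \in unitmx -> (forall i, 0 < w 0 i) ->
  cov L w \in unitmx.
Proof.
move=> A_unit w_pos; rewrite !unitmx_mul unitmx_tr !unitmx_inv A_unit andbT /=.
by rewrite unitmxE det_diag unitfE; apply/prodf_neq0 => i _; rewrite gt_eqF.
Qed.

Lemma delta_mul_tr_1_sub L r a : (e_ r *m (1%:M - L)^T) 0 a = (a == r)%:R - L a r.
Proof. by rewrite -rowE !mxE. Qed.

Lemma cov_sink_row L w r : 1%:M - L \in unitmx -> (forall b, L r b = 0) ->
  e_ r *m (1%:M - L)^T *m cov L w = w 0 r *: e_ r.
Proof.
move=> A_unit Lr0; set A := 1%:M - L.
have eA : e_ r *m A = e_ r by apply/rowP => b; rewrite -rowE !mxE Lr0 subr0 eq_sym.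
have eD : e_ r *m diag_mx w = w 0 r *: e_ r.
  apply/rowP => b; rewrite mul_mx_diag !mxE eqxx.
  by case: (eqVneq r b) => [->|_]; rewrite ?mulr1 ?mul1r ?mulr0 ?mul0r.
rewrite /cov !mulmxA -(mulmxA _ A^T) -trmx_mul mulVmx // trmx1 mulmx1 eD.
by rewrite -scalemxAl -{1}eA mulmxK.
Qed.

Lemma cov1_mul_prec L : 1%:M - L \in unitmx ->
  cov L (const_mx 1) *m ((1%:M - L) *m (1%:M - L)^T) = 1%:M.
Proof.
move=> A_unit; rewrite /cov diag_const_mx mulmx1 !mulmxA mulmxKV //.
by rewrite -trmx_mul mulmxV // trmx1.
Qed.

Lemma param_sink_col_eq E c F c' S L w M d r : is_dag E -> is_dag F ->
  param E c S L w -> param F c' S M d ->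
  (forall b, L r b = 0) -> (forall b, M r b = 0) -> forall a, L a r = M a r.
Proof.
move=> dagE dagF [w_pos suppL _ SL] [_ suppM _ SM] Lr0 Mr0 a.
have A_unit := unitmx_1_sub dagE suppL; have B_unit := unitmx_1_sub dagF suppM.
have S_unit : S \in unitmx by rewrite SL cov_unit.
have xS : e_ r *m (1%:M - L)^T *m S = w 0 r *: e_ r by rewrite SL cov_sink_row.
have yS : e_ r *m (1%:M - M)^T *m S = d 0 r *: e_ r by rewrite SM cov_sink_row.
have := unitmx_scale_preimage_eq (r := r) S_unit xS yS.
rewrite !delta_mul_tr_1_sub eqxx Lr0 Mr0 subr0 => /(_ erefl erefl)/rowP/(_ a).
by rewrite !delta_mul_tr_1_sub => /addrI/oppr_inj.
Qed.

Lemma param_cols_vanish_transfer E c F c' (P : 'I_n -> Prop) S L w M d :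
  is_dag E -> is_dag F ->
  (forall x y, P x -> E x y -> P y) -> (forall x y, P x -> E x y = F x y) ->
  param E c S L w -> param F c' S M d ->
  (forall a q, P q -> M a q = 0) -> forall a q, P q -> L a q = 0.
Proof.
move=> dagE dagF closedP outP pL pM M0.
suff L0 q : P q -> forall a, L a q = 0 by move=> a q /L0.
elim/(dag_ind dagE): q => r IH Pr.
have [_ suppL _ _] := pL; have [_ suppM _ _] := pM.
have Lr0 b : L r b = 0.
  by case: (boolP (E r b)) => [Erb|/suppL //]; apply: IH Erb (closedP _ _ Pr Erb) r.
have Mr0 b : M r b = 0.
  case: (boolP (F r b)) => [Frb|/suppM //].
  by apply: M0; apply: (closedP r); rewrite ?outP.
by move=> a; rewrite (param_sink_col_eq dagE dagF pL pM Lr0 Mr0) M0.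
Qed.

Definition color_class_mx F (c' : 'I_n -> 'I_n -> nat) s j : 'M[R]_n :=
  \matrix_(a, b) (F a b && (c' a b == c' s j))%:R.

Definition colors_into_mx F (c' : 'I_n -> 'I_n -> nat) s : 'M[R]_n :=
  \matrix_(a, b) (if F a b && (b == s) then (c' a b).+1%:R else 0).

Lemma param_color_class_mx F c' s j :
  param F c' (cov (color_class_mx F c' s j) (const_mx 1))
    (color_class_mx F c' s j) (const_mx 1).
Proof.
split=> [i|i k /negbTE Fik|i k k' l Fik Fk'l cc|//]; rewrite !mxE ?ltr01 ?Fik //.
by rewrite Fk'l cc.
Qed.

Lemma param_colors_into_mx F c' s : blocked F c' ->
  param F c' (cov (colors_into_mx F c' s) (const_mx 1))
    (colors_into_mx F c' s) (const_mx 1).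
Proof.
move=> blkF; split=> [i|i k /negbTE Fik|i k k' l Fik Fk'l cc|//].
- by rewrite mxE ltr01.
- by rewrite mxE Fik.
- by move: (Fk'l) (cc); rewrite -(blkF _ _ _ _ Fik Fk'l cc) !mxE Fik => -> ->.
Qed.

Lemma color_class_prec_row F c' s j : is_dag F -> blocked F c' -> F s j ->
  let A := 1%:M - color_class_mx F c' s j in
  forall a, (e_ s *m (A *m A^T)) 0 a =
    (a == s)%:R - ((a == j)%:R - color_class_mx F c' s j a j).
Proof.
move=> dagF blkF Fsj A a; set L' := color_class_mx F c' s j.
have sj : s != j by apply: contraTneq Fsj => ->; apply: dag_irrefl.
have blk_col b : F s b && (c' s b == c' s j) = (b == j).
  case: (eqVneq b j) => [->|]; first by rewrite Fsj eqxx.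
  by apply: contra_neqF => /andP[Fsb /eqP/(blkF _ _ _ _ Fsb Fsj)].
have eA : e_ s *m A = e_ s - e_ j.
  by apply/rowP => b; rewrite -rowE !mxE blk_col eqxx eq_sym.
have L'as : L' a s = 0.
  rewrite mxE; case: (boolP (F a s)) => //= Fas.
  by case: eqP => // /(blkF _ _ _ _ Fas Fsj)/eqP; rewrite (negbTE sj).
by rewrite mulmxA eA mulmxBl [LHS]mxE [X in _ + X]mxE !delta_mul_tr_1_sub L'as subr0.
Qed.

Lemma color_class_cov_not_sink E c F c' s j L w :
  BPEC_DAG E c -> BPEC_DAG F c' -> F s j ->
  param E c (cov (color_class_mx F c' s j) (const_mx 1)) L w ->
  (forall b, L s b = 0) -> False.
Proof.
move=> [dagE colE blkE] [dagF _ blkF] Fsj pL Ls0; set L' := color_class_mx F c' s j.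
have [w_pos suppL constL SL] := pL; have [_ suppL' _ _] := param_color_class_mx F c' s j.
have A_unit := unitmx_1_sub dagE suppL; have A'_unit := unitmx_1_sub dagF suppL'.
have xP : e_ s *m (1%:M - L)^T = w 0 s *: (e_ s *m ((1%:M - L') *m (1%:M - L')^T)).
  by rewrite scalemxAl -(cov_sink_row w A_unit Ls0) -SL -mulmxA cov1_mul_prec ?mulmx1.
have xE a : (a == s)%:R - L a s = w 0 s * ((a == s)%:R - ((a == j)%:R - L' a j)).
  have := congr1 (fun x : 'rV[R]_n => x 0 a) xP.
  by rewrite delta_mul_tr_1_sub mxE color_class_prec_row.
have sj : s != j by apply: contraTneq Fsj => ->; apply: dag_irrefl.
have Ljs : L j s = w 0 s.
  have L'jj : L' j j = 0 by rewrite mxE (negbTE (dag_irrefl dagF j)).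
  by have := xE j; rewrite eq_sym (negbTE sj) eqxx L'jj !sub0r subr0 mulrN1 => /oppr_inj.
have Ejs : E j s.
  by apply/negPn/negP => /suppL; rewrite Ljs => w0; move: (w_pos s); rewrite w0 ltxx.
have [k [l [Ekl kl_neq ckl]]] := colE _ _ Ejs.
have ls := blkE _ _ _ _ Ekl Ejs ckl; subst l.
have kj : k != j by apply: contraNneq kl_neq => ->.
have ks : k != s by apply: contraTneq Ekl => ->; apply: dag_irrefl.
have Lks : L k s = w 0 s by rewrite -Ljs (constL _ _ _ _ Ekl Ejs ckl).
have := xE k; rewrite (negbTE ks) (negbTE kj) Lks !sub0r opprK => wL'.
have : 0 <= w 0 s * L' k j by apply: mulr_ge0; [exact: ltW | rewrite mxE ler0n].
by rewrite -wL' oppr_ge0 leNgt w_pos.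
Qed.

Lemma colors_into_cov_sink_parents E c F c' s L w : is_dag E -> BPEC_DAG F c' ->
  param E c (cov (colors_into_mx F c' s) (const_mx 1)) L w ->
  (forall b, L s b = 0) ->
  (forall a, F a s -> E a s) /\
  (forall a b, F a s -> F b s -> c a s = c b s -> c' a s = c' b s).
Proof.
move=> dagE [dagF _ blkF] pL Ls0.
have Vs0 b : colors_into_mx F c' s s b = 0.
  by rewrite mxE; case: eqP => [->|]; rewrite ?(negbTE (dag_irrefl dagF s)) ?andbF.
have colL := param_sink_col_eq dagE dagF pL (param_colors_into_mx s blkF) Ls0 Vs0.
have [_ suppL constL _] := pL.
have FE a : F a s -> E a s.
  by move=> Fas; apply/negPn/negP => /suppL/eqP; rewrite colL mxE Fas eqxx pnatr_eq0.
split=> // a b Fas Fbs cab.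
have := constL _ _ _ _ (FE _ Fas) (FE _ Fbs) cab.
by rewrite !colL !mxE Fas Fbs eqxx => /eqP; rewrite eqr_nat eqSS => /eqP.
Qed.

End Parametrization.

Section Settlement.
Variables (R : realType) (n : nat) (E F : rel 'I_n) (c c' : 'I_n -> 'I_n -> nat).
Variable P : 'I_n -> Prop.
Hypotheses (bpecE : BPEC_DAG E c) (bpecF : BPEC_DAG F c').
Hypothesis modelFE : forall S : 'M[R]_n, in_model F c' S -> in_model E c S.
Hypothesis closedP : forall x y, P x -> E x y -> P y.
Hypothesis outP : forall x y, P x -> E x y = F x y.
Variable r : 'I_n.
Hypothesis childrenP : forall d, E r d -> P d.

Lemma sink_param_of_vanishing (S L0 : 'M[R]_n) (w0 : 'rV[R]_n) :
  param F c' S L0 w0 ->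
  (forall a q, P q -> L0 a q = 0) ->
  exists L w, param E c S L w /\ forall b, L r b = 0.
Proof.
move=> pL0 L00; have [dagE _ _] := bpecE; have [dagF _ _] := bpecF.
have [L [w pL]] : in_model E c S by apply: modelFE; exists L0, w0.
have L0P := param_cols_vanish_transfer dagE dagF closedP outP pL pL0 L00.
have [_ suppL _ _] := pL.
by exists L, w; split=> // b; case: (boolP (E r b)) => [/childrenP/(L0P r)|/suppL].
Qed.

Lemma settled_children j : F r j -> P j.
Proof.
move=> Frj; apply: NNPP => notPj; have [_ _ blkF] := bpecF.
have vanish a q : P q -> color_class_mx R F c' r j a q = 0.
  move=> Pq; rewrite mxE; case: (boolP (F a q)) => //= Faq.
  by case: eqP => // /(blkF _ _ _ _ Faq Frj) qj; rewrite -qj in notPj.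
have [L [w [pL Lr0]]] := sink_param_of_vanishing (param_color_class_mx R F c' r j) vanish.
exact: color_class_cov_not_sink bpecE bpecF Frj pL Lr0.
Qed.

Lemma settled_parents : ~ P r ->
  (forall a, F a r -> E a r) /\
  (forall a b, F a r -> F b r -> c a r = c b r -> c' a r = c' b r).
Proof.
move=> notPr; have [dagE _ _] := bpecE; have [_ _ blkF] := bpecF.
have vanish a q : P q -> colors_into_mx R F c' r a q = 0.
  by move=> Pq; rewrite mxE; case: eqP => [qr|]; [rewrite qr in Pq | rewrite andbF].
have [L [w [pL Lr0]]] := sink_param_of_vanishing (param_colors_into_mx R r blkF) vanish.
exact: colors_into_cov_sink_parents dagE bpecF pL Lr0.
Qed.

End Settlement.

Section Uniqueness.
Variables (R : realType) (n : nat) (E F : rel 'I_n) (c c' : 'I_n -> 'I_n -> nat).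
Hypotheses (bpecE : BPEC_DAG E c) (bpecF : BPEC_DAG F c').
Hypothesis modelEF : forall S : 'M[R]_n, in_model E c S <-> in_model F c' S.

Definition agree_at s :=
  [/\ forall a, E a s = F a s,
      forall a b, E a s -> E b s -> (c a s = c b s <-> c' a s = c' b s) &
      forall d, E s d = F s d].

Inductive settled : 'I_n -> Prop :=
  Settled r : agree_at r -> (forall d, E r d -> settled d) -> settled r.

Lemma settled_agree x : settled x -> agree_at x.
Proof. by case. Qed.

Lemma settled_succ x y : settled x -> E x y -> settled y.
Proof. by case=> {}x _; apply. Qed.

Lemma settled_out x y : settled x -> E x y = F x y.
Proof. by case/settled_agree. Qed.

Lemma all_settled r : settled r.
Proof.
have [dagE _ _] := bpecE.
elim/(dag_ind dagE): r => r IH; have [//|notPr] := classic (settled r).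
have modelFE S := (modelEF S).2; have modelEF' S := (modelEF S).1.
have closedF x y : settled x -> F x y -> settled y.
  by move=> Px; rewrite -(settled_out _ Px); apply: settled_succ.
have outF x y : settled x -> F x y = E x y by move=> /settled_out ->.
have Fchildren := settled_children bpecE bpecF modelFE settled_succ settled_out IH.
have [FE cc'] := settled_parents bpecE bpecF modelFE settled_succ settled_out IH notPr.
have [EF c'c] := settled_parents bpecF bpecE modelEF' closedF outF Fchildren notPr.
constructor=> //; split=> [a|a b Ear Ebr|d].
- by apply/idP/idP => [/EF|/FE].
- by split; [apply: cc'; apply: EF | apply: c'c].
- apply/idP/idP => [Erd|Frd].
    by have [<- _ _] := settled_agree (IH d Erd).
  by have [-> _ _] := settled_agree (Fchildren d Frd).
Qed.

End Uniqueness.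

Theorem theorem5p13 (R : realType) (n : nat)
  (E : rel 'I_n) (c : 'I_n -> 'I_n -> nat)
  (F : rel 'I_n) (c' : 'I_n -> 'I_n -> nat) :
  BPEC_DAG E c -> BPEC_DAG F c' ->
  (forall S : 'M[R]_n, in_model E c S <-> in_model F c' S) ->
  (forall i j, E i j = F i j) /\
  (forall i j k l, E i j -> E k l -> (c i j = c k l <-> c' i j = c' k l)).
Proof.
move=> bpecE bpecF modelEF.
have agree j := settled_agree (all_settled bpecE bpecF modelEF j).
have EF i j : E i j = F i j by have [-> _ _] := agree j.
have [_ _ blkE] := bpecE; have [_ _ blkF] := bpecF.
split=> // i j k l Eij Ekl; have [_ colors _] := agree j.
have Fij : F i j by rewrite -EF.
have Fkl : F k l by rewrite -EF.
split=> cc.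
- by have jl := blkE _ _ _ _ Eij Ekl cc; subst l; apply/(colors _ _ Eij Ekl).
- by have jl := blkF _ _ _ _ Fij Fkl cc; subst l; apply/(colors _ _ Eij Ekl).
Qed.
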